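(* Let $m>n$, $1<p<\infty$, $Y^m=[0,1)^m$, and let $\mathbf{R}\in\mathbb{R}^{m\times n}$ satisfy $\mathbf{R}^*k\neq0$ for all $k\in\mathbb{Z}^m\setminus\{0\}$. Then $$\mathcal{G}^p_{\mathbf{R}}:=\{w\in L^p_\#(Y^m;\mathbb{R}^n):\ \hat w_k=\lambda_k\mathbf{R}^*k\ \text{for all } k\in\mathbb{Z}^m, \text{ for some } \{\lambda_k\}_{k\in\mathbb{Z}^m}\subset\mathbb{C}\text{ with }\lambda_0=0\}$$ is a closed linear subspace of $L^p_\#(Y^m;\mathbb{R}^n)$, where $\hat w_k:=\int_{Y^m}w(y)e^{-2\pi ik\cdot y}\,dy$.
   Context: $L^p_\#(Y^m;\mathbb{R}^n)$ denotes the $Y^m$-periodic functions in $L^p_{\rm loc}(\mathbb{R}^m;\mathbb{R}^n)$, with the $L^p(Y^m)$ norm; $\mathbf{R}^*$ is the transpose of $\mathbf{R}$. *)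

From HB Require Import structures.
From mathcomp Require Import all_boot all_order all_algebra.
From mathcomp Require Import all_classical all_reals all_analysis.
Set Implicit Arguments.
Unset Strict Implicit.
Unset Printing Implicit Defensive.
Import Order.TTheory GRing.Theory Num.Theory.
Import numFieldNormedType.Exports.
Local Open Scope classical_set_scope.
Local Open Scope ring_scope.

Section defs.
Variable R : realType.

Definition Ycell (m : nat) : set (m.-tuple R) :=
  [set y | forall i : 'I_m, 0 <= tnth y i < 1].

Definition box (m : nat) (a b : m.-tuple R) : set (m.-tuple R) :=
  [set y | forall i : 'I_m, tnth a i <= tnth y i < tnth b i].

(* mu is the Lebesgue measure on R^m: it gives boxes their volume
   (this characterizes Lebesgue measure on the Borel sets of R^m) *)
Definition is_lebesgue_measure (m : nat)
  (mu : {measure set (m.-tuple R) -> \bar R}) : Prop :=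
  forall a b : m.-tuple R, (forall i, tnth a i <= tnth b i) ->
    mu (box a b) = (\prod_(i < m) (tnth b i - tnth a i))%:E.

Definition shift1 (m : nat) (y : m.-tuple R) (i : 'I_m) : m.-tuple R :=
  [tuple tnth y j + (j == i)%:R | j < m].

Definition normv (n : nat) (v : 'rV[R]_n) : R :=
  Num.sqrt (\sum_(j < n) v ord0 j ^+ 2).

Definition periodic (m n : nat) (w : m.-tuple R -> 'rV[R]_n) : Prop :=
  forall y i, w (shift1 y i) = w y.

Definition Lp_per (m n : nat) (mu : {measure set (m.-tuple R) -> \bar R})
  (p : R) (w : m.-tuple R -> 'rV[R]_n) : Prop :=
  [/\ periodic w,
      (forall j : 'I_n, measurable_fun (@Ycell m) (fun y => w y ord0 j)) &
      (\int[mu]_(y in @Ycell m) ((normv (w y)) `^ p)%:E < +oo)%E].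

Definition Lp_dist_p (m n : nat) (mu : {measure set (m.-tuple R) -> \bar R})
  (p : R) (w v : m.-tuple R -> 'rV[R]_n) : \bar R :=
  (\int[mu]_(y in @Ycell m) ((normv (w y - v y)) `^ p)%:E)%E.

Definition kdot (m : nat) (k : 'rV[int]_m) (y : m.-tuple R) : R :=
  \sum_(i < m) (k ord0 i)%:~R * tnth y i.

(* real and imaginary parts of the Fourier coefficient
   hat w_k = int_{Y^m} w(y) e^{-2 pi i k.y} dy
           = int w cos(2 pi k.y) dy - i int w sin(2 pi k.y) dy *)
Definition fourier_re (m n : nat) (mu : {measure set (m.-tuple R) -> \bar R})
  (w : m.-tuple R -> 'rV[R]_n) (k : 'rV[int]_m) : 'rV[R]_n :=
  \row_(j < n) Rintegral mu (@Ycell m)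
     (fun y => w y ord0 j * cos (2 * pi * kdot k y)).

Definition fourier_im (m n : nat) (mu : {measure set (m.-tuple R) -> \bar R})
  (w : m.-tuple R -> 'rV[R]_n) (k : 'rV[int]_m) : 'rV[R]_n :=
  \row_(j < n) - Rintegral mu (@Ycell m)
     (fun y => w y ord0 j * sin (2 * pi * kdot k y)).

(* R^* k, written as the row vector k^T R *)
Definition Rstar_k (m n : nat) (Rm : 'M[R]_(m, n)) (k : 'rV[int]_m) : 'rV[R]_n :=
  (map_mx (fun z : int => z%:~R) k) *m Rm.

(* the set G^p_R; lambda_k = la k + i lb k *)
Definition G_R (m n : nat) (mu : {measure set (m.-tuple R) -> \bar R})
  (p : R) (Rm : 'M[R]_(m, n)) (w : m.-tuple R -> 'rV[R]_n) : Prop :=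
  Lp_per mu p w /\
  exists la lb : 'rV[int]_m -> R,
    [/\ la 0 = 0, lb 0 = 0 &
        forall k, fourier_re mu w k = la k *: Rstar_k Rm k /\
                  fourier_im mu w k = lb k *: Rstar_k Rm k].

Definition closed_linear_subspace (m n : nat)
  (mu : {measure set (m.-tuple R) -> \bar R}) (p : R)
  (G : (m.-tuple R -> 'rV[R]_n) -> Prop) : Prop :=
  [/\ (forall w, G w -> Lp_per mu p w),
      G (fun _ => 0),
      (forall w v, G w -> G v -> G (fun y => w y + v y)),
      (forall (c : R) w, G w -> G (fun y => c *: w y)) &
      (forall (ws : nat -> m.-tuple R -> 'rV[R]_n) w,
          (forall j, G (ws j)) -> Lp_per mu p w ->
          (fun j => Lp_dist_p mu p (ws j) w) @ \oo --> 0%E -> G w)].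

End defs.

From Pilot Require Import Defs.
From HB Require Import structures.
From mathcomp Require Import all_boot all_order all_algebra.
From mathcomp Require Import all_classical all_reals all_analysis.
From mathcomp Require Import measurable_realfun lebesgue_integral ring.
Set Implicit Arguments.
Unset Strict Implicit.
Unset Printing Implicit Defensive.
Import Order.TTheory GRing.Theory Num.Theory.
Import numFieldNormedType.Exports.
Local Open Scope classical_set_scope.
Local Open Scope ring_scope.

(* Each Fourier coefficient w |-> hat w_k is a continuous linear map on
   L^p_#(Y^m; R^n).  Linearity is linearity of the integral; for continuity,
   integrating the pointwise bound |t| <= e + e^(1-p) |t|^p (p >= 1, e > 0)
   over the unit-volume cell gives, for any weight |g| <= 1,
   |int (w - v) g| <= e + e^(1-p) ||w - v||_p^p.  So G^p_R is the set of
   L^p_# functions whose coefficients lie in the lines spanned by the R^* k,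
   i.e. an intersection of preimages of closed subspaces of R^n under
   continuous linear maps. *)

Section euclidean_norm.
Variables (R : realType) (n : nat).
Implicit Types u v : 'rV[R]_n.

Lemma normv_ge0 v : 0 <= normv v.
Proof. exact: sqrtr_ge0. Qed.

Lemma normv_sqr v : normv v ^+ 2 = \sum_(j < n) v ord0 j ^+ 2.
Proof. by rewrite sqr_sqrtr // sumr_ge0 // => j _; exact: sqr_ge0. Qed.

Lemma normv0 : normv (0 : 'rV[R]_n) = 0.
Proof. by rewrite /normv big1 ?sqrtr0 // => j _; rewrite mxE expr0n. Qed.

Lemma normv_coord v j : `|v ord0 j| <= normv v.
Proof.
rewrite -(@ler_pXn2r _ 2) ?nnegrE ?normv_ge0 //.
rewrite normv_sqr real_normK ?num_real //.
by rewrite (bigD1 j) //= lerDl sumr_ge0 // => i _; exact: sqr_ge0.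
Qed.

Lemma normvZ (a : R) v : normv (a *: v) = `|a| * normv v.
Proof.
rewrite /normv -sqrtr_sqr -sqrtrM ?sqr_ge0 // mulr_sumr.
by congr Num.sqrt; apply: eq_bigr => j _; rewrite mxE exprMn.
Qed.

Lemma normvD_le u v : normv (u + v) <= 2 * Num.max (normv u) (normv v).
Proof.
set M := Num.max _ _; have M0 : 0 <= M by rewrite le_max normv_ge0.
rewrite -(@ler_pXn2r _ 2) ?nnegrE ?normv_ge0 ?mulr_ge0 // normv_sqr.
have sqrD_le (a b : R) : (a + b) ^+ 2 <= 2 * (a ^+ 2 + b ^+ 2).
  by rewrite -subr_ge0 (_ : _ - _ = (a - b) ^+ 2) ?sqr_ge0 //; ring.
have leM x : 0 <= x -> x <= M -> x ^+ 2 <= M ^+ 2.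
  by move=> x0 xM; rewrite ler_pXn2r.
under eq_bigr do rewrite mxE.
apply: (le_trans (ler_sum _ (fun j _ => sqrD_le (u ord0 j) (v ord0 j)))).
rewrite -mulr_sumr big_split /= -!normv_sqr exprMn (_ : 2 ^+ 2 = 2 * 2) //.
rewrite -mulrA ler_pM2l // mulr2n mulrDl mul1r.
by rewrite lerD // leM ?normv_ge0 // le_max lexx ?orbT.
Qed.

End euclidean_norm.

Section unit_cell.
Variables (R : realType) (m : nat).
Notation Y := (@Ycell R m).

Lemma measurable_Ycell : measurable Y.
Proof.
pose F (i : nat) : set (m.-tuple R) := if insub i is Some j
  then (fun y : m.-tuple R => tnth y j) @^-1` `[0, 1[ else setT.
have -> : Y = \bigcap_i F i.
  apply/seteqP; split => y /= Yy.
    move=> i _; rewrite /F; case: insubP => // j _ _ /=.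
    by rewrite in_itv /= Yy.
  by move=> j; have := Yy (val j) I; rewrite /F valK /= in_itv.
apply: bigcapT_measurable => i; rewrite /F; case: insubP => [j _ _|_] //.
by rewrite -[_ @^-1` _]setTI; exact: measurable_tnth.
Qed.

Lemma lebesgue_Ycell (mu : {measure set (m.-tuple R) -> \bar R}) :
  is_lebesgue_measure mu -> mu Y = 1%E.
Proof.
move=> leb_mu.
have -> : Y = box [tuple (0 : R) | _ < m] [tuple (1 : R) | _ < m].
  by apply/seteqP; split => y /= Yy i; move: (Yy i); rewrite !tnth_mktuple.
rewrite leb_mu => [|i]; last by rewrite !tnth_mktuple ler01.
by rewrite big1 // => i _; rewrite !tnth_mktuple subr0.
Qed.

Lemma measurable_kdot (k : 'rV[int]_m) : measurable_fun setT (@kdot R m k).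
Proof.
apply: measurable_sum => i; apply: measurable_funM; first exact: measurable_cst.
exact: measurable_tnth.
Qed.

Lemma measurable_comp_kdot (f : R -> R) (k : 'rV[int]_m) : continuous f ->
  measurable_fun setT (fun y => f (2 * pi * kdot k y)).
Proof.
move=> cf; apply: measurableT_comp; first exact: continuous_measurable_fun.
by apply: measurable_funM; [exact: measurable_cst|exact: measurable_kdot].
Qed.

End unit_cell.

Section Lp_space.
Variables (R : realType) (m n : nat).
Variable mu : {measure set (m.-tuple R) -> \bar R}.
Variable p : R.
Hypothesis p_gt0 : 0 < p.
Let p_ge0 : 0 <= p := ltW p_gt0.
Notation Y := (@Ycell R m).
Let mY : measurable Y := @measurable_Ycell R m.
Implicit Types u v w : m.-tuple R -> 'rV[R]_n.

Lemma measurable_normv_powR u (D : set (m.-tuple R)) :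
  (forall j, measurable_fun D (fun y => u y ord0 j)) ->
  measurable_fun D (fun y => (normv (u y) `^ p)%:E).
Proof.
move=> meas_u; apply/measurable_EFinP.
apply: (measurableT_comp (measurable_powR _)).
apply: (measurableT_comp (continuous_measurable_fun (@sqrt_continuous R))).
by apply: measurable_sum => j; exact: measurable_funX.
Qed.

Lemma integral_normv_powR_fin w : Lp_per mu p w ->
  (\int[mu]_(y in Y) (normv (w y) `^ p)%:E)%E \is a fin_num.
Proof.
case=> _ _ fin_w; rewrite ge0_fin_numE // integral_ge0 // => y _.
by rewrite lee_fin powR_ge0.
Qed.

Lemma Lp_per_le u v w (K : R) : 0 <= K -> Defs.periodic u ->
  (forall j, measurable_fun Y (fun y => u y ord0 j)) ->
  Lp_per mu p v -> Lp_per mu p w ->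
  (forall y, Y y ->
     normv (u y) `^ p <= K * (normv (v y) `^ p + normv (w y) `^ p)) ->
  Lp_per mu p u.
Proof.
move=> K0 per_u meas_u Lv Lw uvw; split => //.
have [[_ mv _] [_ mw _]] := (Lv, Lw).
have powR_ge0E (z : 'rV[R]_n) : (0 <= (normv z `^ p)%:E)%E.
  by rewrite lee_fin powR_ge0.
apply: (le_lt_trans (y := \int[mu]_(y in Y)
   (K%:E * ((normv (v y) `^ p)%:E + (normv (w y) `^ p)%:E)))%E).
  apply: ge0_le_integral => //.
  - exact: measurable_normv_powR.
  - apply: emeasurable_funM; first exact: measurable_cst.
    by apply: emeasurable_funD; exact: measurable_normv_powR.
have mvw : measurable_fun Y
    (fun y => (normv (v y) `^ p)%:E + (normv (w y) `^ p)%:E)%E.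
  by apply: emeasurable_funD; exact: measurable_normv_powR.
rewrite ge0_integralZl_EFin //; last by move=> y _; rewrite adde_ge0.
rewrite ge0_integralD //; try exact: measurable_normv_powR.
rewrite -(fineK (integral_normv_powR_fin Lv)).
by rewrite -(fineK (integral_normv_powR_fin Lw)) -EFinD -EFinM ltry.
Qed.

Lemma Lp_per0 : Lp_per mu p (fun=> 0 : 'rV[R]_n).
Proof.
split => //.
under eq_integral do rewrite normv0 powR0 ?gt_eqF //.
by rewrite integral0 ltry.
Qed.

Lemma Lp_perD v w : Lp_per mu p v -> Lp_per mu p w ->
  Lp_per mu p (fun y => v y + w y).
Proof.
move=> Lv Lw; have [[per_v mv _] [per_w mw _]] := (Lv, Lw).
apply: (Lp_per_le (powR_ge0 2 p) _ _ Lv Lw).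
- by move=> y i; rewrite per_v per_w.
- move=> j; under eq_fun do rewrite mxE; exact: measurable_funD.
move=> y _; pose M := Num.max (normv (v y)) (normv (w y)).
have M0 : 0 <= M by rewrite le_max normv_ge0.
apply: (le_trans (y := (2 * M) `^ p)).
  by rewrite ge0_ler_powR ?nnegrE ?normv_ge0 ?mulr_ge0 ?normvD_le.
rewrite powRM // ler_wpM2l ?powR_ge0 //.
by rewrite /M maxEle; case: ifP => _; rewrite ?lerDr ?lerDl powR_ge0.
Qed.

Lemma Lp_perZ (a : R) w : Lp_per mu p w -> Lp_per mu p (fun y => a *: w y).
Proof.
move=> Lw; have [per_w mw _] := Lw.
apply: (Lp_per_le (powR_ge0 `|a| p) _ _ Lw Lw).
- by move=> y i; rewrite per_w.
- move=> j; under eq_fun do rewrite mxE.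
  by apply: measurable_funM; [exact: measurable_cst|exact: mw].
move=> y _; rewrite normvZ powRM ?normv_ge0 // ler_wpM2l ?powR_ge0 //.
by rewrite lerDl powR_ge0.
Qed.

End Lp_space.

Lemma le_powR_eps (R : realType) (p x e : R) : 1 <= p -> 0 <= x -> 0 < e ->
  x <= e + (e `^ (p - 1))^-1 * x `^ p.
Proof.
move=> p_ge1 x0 e0; have [xe|ex] := leP x e.
  by rewrite ler_wpDr // mulr_ge0 ?invr_ge0 ?powR_ge0.
apply: ler_wpDl; first exact: ltW.
rewrite -(mulr_powRB1 x0 (lt_le_trans ltr01 p_ge1)) mulrCA.
apply: ler_peMr => //; rewrite ler_pdivlMl ?powR_gt0 // mulr1.
have e_le_x := ltW ex; have e_ge0 := ltW e0.
by apply: ge0_ler_powR; rewrite ?nnegrE ?subr_ge0 ?(le_trans e_ge0).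
Qed.

(* [v <= U] means [v *m cokermx U = 0], which passes to coordinatewise
   limits. *)
Lemma submx_cvg (R : realType) (n d : nat) (U : 'M[R]_(d, n))
    (u : nat -> 'rV[R]_n) (v : 'rV[R]_n) :
  (forall c, (fun j => u j ord0 c) @ \oo --> v ord0 c) ->
  (forall j, (u j <= U)%MS) -> (v <= U)%MS.
Proof.
move=> cvg_u uU; rewrite submxE; apply/eqP/rowP => c; rewrite !mxE.
have cvg_uK : (fun j => (u j *m cokermx U) ord0 c) @ \oo -->
    \sum_i v ord0 i * cokermx U i c.
  under eq_fun do rewrite mxE.
  apply: (@cvg_big _ _ +%R 0 xpredT add_continuous) => i _.
  by apply: cvgM; [exact: cvg_u|exact: cvg_cst].
apply: (cvg_unique (@Rhausdorff R) cvg_uK).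
apply: cvg_near_cst; apply: nearW => j.
by move: (uU j); rewrite submxE => /eqP ->; rewrite mxE.
Qed.

Section moments.
Variables (R : realType) (m n : nat).
Variable mu : {measure set (m.-tuple R) -> \bar R}.
Variable p : R.
Notation Y := (@Ycell R m).
Hypotheses (p_ge1 : 1 <= p) (muY1 : mu Y = 1%E).
Let p_gt0 : 0 < p := lt_le_trans ltr01 p_ge1.
Let mY : measurable Y := @measurable_Ycell R m.
Implicit Types u v w : m.-tuple R -> 'rV[R]_n.

Definition moment (g : m.-tuple R -> R) w : 'rV[R]_n :=
  \row_(j < n) Rintegral mu Y (fun y => w y ord0 j * g y).

Lemma integral_abs_le_eps u (f : m.-tuple R -> R) (e : R) :
  (forall j, measurable_fun Y (fun y => u y ord0 j)) ->
  measurable_fun Y f -> 0 < e -> (forall y, Y y -> `|f y| <= normv (u y)) ->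
  (\int[mu]_(y in Y) `|(f y)%:E| <=
     e%:E + ((e `^ (p - 1))^-1)%:E * \int[mu]_(y in Y) (normv (u y) `^ p)%:E)%E.
Proof.
move=> meas_u mf e0 fu; set c := (e `^ (p - 1))^-1.
have c0 : 0 <= c by rewrite invr_ge0 powR_ge0.
have mN := measurable_normv_powR p meas_u.
apply: (le_trans
  (y := \int[mu]_(y in Y) (e%:E + c%:E * (normv (u y) `^ p)%:E))%E).
  apply: ge0_le_integral => //.
  - apply: measurableT_comp => //; exact/measurable_EFinP.
  - by apply: emeasurable_funD => //; exact: emeasurable_funM.
  - move=> y Yy; rewrite abse_EFin -EFinM -EFinD lee_fin.
    exact: le_trans (fu y Yy) (le_powR_eps p_ge1 (normv_ge0 _) e0).
rewrite ge0_integralD //; last 3 first.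
- by move=> y _; rewrite lee_fin ltW.
- by move=> y _; rewrite mule_ge0 ?lee_fin ?powR_ge0.
- exact: emeasurable_funM.
rewrite integral_cst // muY1 mule1 ge0_integralZl_EFin // => y _.
by rewrite lee_fin powR_ge0.
Qed.

Section bounded_weight.
Variable g : m.-tuple R -> R.
Hypotheses (mg : measurable_fun setT g) (g_le1 : forall y, `|g y| <= 1).

Lemma integrable_coord_weight w j : Lp_per mu p w ->
  mu.-integrable Y (EFin \o (fun y => w y ord0 j * g y)).
Proof.
move=> Lw; have [_ mw _] := Lw.
have mf : measurable_fun Y (fun y => w y ord0 j * g y).
  by apply: measurable_funM => //; exact: measurable_funTS.
apply/integrableP; split; first exact/measurable_EFinP.
apply: le_lt_trans (integral_abs_le_eps mw mf ltr01 _) _.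
  move=> y _; rewrite normrM (le_trans _ (normv_coord (w y) j)) //.
  by rewrite ler_piMr.
by rewrite -(fineK (integral_normv_powR_fin Lw)) -EFinM -EFinD ltry.
Qed.

Lemma moment0 : moment g (fun=> 0) = 0.
Proof.
apply/rowP => j; rewrite !mxE.
by under eq_Rintegral do rewrite mul0r; rewrite Rintegral_cst // mul0r.
Qed.

Lemma momentD v w : Lp_per mu p v -> Lp_per mu p w ->
  moment g (fun y => v y + w y) = moment g v + moment g w.
Proof.
move=> Lv Lw; apply/rowP => j; rewrite !mxE -RintegralD //;
  try exact: integrable_coord_weight.
by apply: eq_Rintegral => y _; rewrite mxE mulrDl.
Qed.

Lemma momentZ (a : R) w : Lp_per mu p w ->
  moment g (fun y => a *: w y) = a *: moment g w.
Proof.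
move=> Lw; apply/rowP => j; rewrite !mxE -RintegralZl //;
  last exact: integrable_coord_weight.
by apply: eq_Rintegral => y _; rewrite mxE mulrA.
Qed.

Lemma moment_dist_le v w j (e : R) : Lp_per mu p v -> Lp_per mu p w -> 0 < e ->
  (`|moment g v ord0 j - moment g w ord0 j|%:E <=
     e%:E + ((e `^ (p - 1))^-1)%:E * Lp_dist_p mu p v w)%E.
Proof.
move=> Lv Lw e0; have [[_ mv _] [_ mw _]] := (Lv, Lw).
have mvw k : measurable_fun Y (fun y => (v y - w y) ord0 k).
  by under eq_fun do rewrite !mxE; exact: measurable_funB.
have mf : measurable_fun Y (fun y => (v y ord0 j - w y ord0 j) * g y).
  by apply: measurable_funM; [exact: measurable_funB|exact: measurable_funTS].
have int_vw := integrableB mY (integrable_coord_weight j Lv)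
  (integrable_coord_weight j Lw).
rewrite !mxE -RintegralB //; try exact: integrable_coord_weight.
under eq_Rintegral do rewrite -mulrBl.
rewrite EFin_normr_Rintegral //; last first.
  by apply: eq_integrable int_vw => // y _ /=; rewrite mulrBl.
apply: le_trans (le_abse_integral mu mY _) _; first exact/measurable_EFinP.
apply: integral_abs_le_eps => // y _; rewrite normrM.
have := normv_coord (v y - w y) j; rewrite !mxE; apply: le_trans.
by rewrite ler_piMr.
Qed.

Lemma cvg_moment (ws : nat -> m.-tuple R -> 'rV[R]_n) w j :
  (forall i, Lp_per mu p (ws i)) -> Lp_per mu p w ->
  (fun i => Lp_dist_p mu p (ws i) w) @ \oo --> 0%E ->
  (fun i => moment g (ws i) ord0 j) @ \oo --> moment g w ord0 j.
Proof.
move=> Lws Lw /fine_cvgP[dist_fin cvg_dist]; apply/cvgrPdist_lt => e e0.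
have e2 : 0 < e / 2 by rewrite divr_gt0.
set C := ((e / 2) `^ (p - 1))^-1.
have C0 : 0 < C by rewrite invr_gt0 powR_gt0.
have dist_small := (cvgrPdist_lt _ _).1 cvg_dist (e / 2 / C) (divr_gt0 e2 C0).
near=> i.
have fin_i : Lp_dist_p mu p (ws i) w \is a fin_num by near: i; exact: dist_fin.
have small_i : `|0 - fine (Lp_dist_p mu p (ws i) w)| < e / 2 / C.
  by near: i; exact: dist_small.
have := moment_dist_le j (Lws i) Lw e2.
rewrite -(fineK fin_i) -EFinM -EFinD lee_fin distrC => /le_lt_trans; apply.
rewrite -/C {2}(splitr e) ltrD2l -(ltr_pdivlMl _ _ C0) mulrC.
by apply: le_lt_trans small_i; rewrite sub0r normrN ler_norm.
Unshelve. all: end_near.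
Qed.

End bounded_weight.

Theorem closed_linear_subspace_moments (I : Type) (g : I -> m.-tuple R -> R)
    (d : nat) (V : I -> 'M[R]_(d, n)) :
  (forall i, measurable_fun setT (g i)) -> (forall i y, `|g i y| <= 1) ->
  closed_linear_subspace mu p
    (fun w => Lp_per mu p w /\ forall i, (moment (g i) w <= V i)%MS).
Proof.
move=> mg g_le1; split.
- by move=> w [].
- by split=> [|i]; [exact: Lp_per0|rewrite moment0 sub0mx].
- move=> v w [Lv Vv] [Lw Vw]; split=> [|i]; first exact: Lp_perD.
  by rewrite (momentD (mg i) (g_le1 i)) //; exact: addmx_sub.
- move=> a w [Lw Vw]; split=> [|i]; first exact: Lp_perZ.
  by rewrite (momentZ (mg i) (g_le1 i)) //; exact: scalemx_sub.
move=> ws w Gws Lw cvg_ws; split=> // i.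
have Lws k : Lp_per mu p (ws k) by case: (Gws k).
apply: (submx_cvg (u := fun k => moment (g i) (ws k))) => [j|k].
  exact: cvg_moment.
by case: (Gws k).
Qed.

End moments.

Lemma sub_rV_scale_coef (R : fieldType) (n : nat) (T : Type) (t0 : T)
    (u r : T -> 'rV[R]_n) :
  r t0 = 0 -> (forall t, (u t <= r t)%MS) ->
  exists a : T -> R, a t0 = 0 /\ forall t, u t = a t *: r t.
Proof.
move=> r0 ur; have /choice[a ua] t : exists a, u t = a *: r t by exact/sub_rVP.
exists (fun t => if r t == 0 then 0 else a t); rewrite r0 eqxx; split=> // t.
by case: eqP => [rt0|_]; rewrite ua // rt0 !scaler0.
Qed.

Section fourier.
Variables (R : realType) (m n : nat).
Variable mu : {measure set (m.-tuple R) -> \bar R}.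
Variables (p : R) (Rm : 'M[R]_(m, n)).
Implicit Types w : m.-tuple R -> 'rV[R]_n.

Definition fourier_kernel (kb : 'rV[int]_m * bool) (y : m.-tuple R) : R :=
  (if kb.2 then cos else sin) (2 * pi * kdot kb.1 y).

Lemma measurable_fourier_kernel kb : measurable_fun setT (fourier_kernel kb).
Proof.
case: kb => k [|]; apply: measurable_comp_kdot.
  exact: continuous_cos.
exact: continuous_sin.
Qed.

Lemma fourier_kernel_le1 kb y : `|fourier_kernel kb y| <= 1.
Proof. by case: kb => k [|]; [exact: cos_max|exact: sin_max]. Qed.

Lemma fourier_reE w k :
  fourier_re mu w k = moment mu (fourier_kernel (k, true)) w.
Proof. by apply/rowP => j; rewrite !mxE. Qed.

Lemma fourier_imE w k :
  fourier_im mu w k = - moment mu (fourier_kernel (k, false)) w.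
Proof. by apply/rowP => j; rewrite !mxE. Qed.

Lemma Rstar_k0 : Rstar_k Rm 0 = 0.
Proof. by rewrite /Rstar_k (_ : map_mx _ 0 = 0) ?mul0mx // map_mx0. Qed.

Lemma G_R_moments w : G_R mu p Rm w <->
  Lp_per mu p w /\
  forall kb, (moment mu (fourier_kernel kb) w <= Rstar_k Rm kb.1)%MS.
Proof.
split=> [[Lw [la [lb [_ _ coef_w]]]]|[Lw sub_w]]; split=> //.
  move=> [k [|]]; have [re im] := coef_w k; apply/sub_rVP.
    by exists (la k); rewrite -fourier_reE.
  by exists (- lb k); rewrite scaleNr -im fourier_imE opprK.
have sub_re k : (fourier_re mu w k <= Rstar_k Rm k)%MS.
  by rewrite fourier_reE; exact: (sub_w (k, true)).
have sub_im k : (fourier_im mu w k <= Rstar_k Rm k)%MS.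
  by rewrite fourier_imE -scaleN1r scalemx_sub // (sub_w (k, false)).
have [la [la0 re]] := sub_rV_scale_coef Rstar_k0 sub_re.
have [lb [lb0 im]] := sub_rV_scale_coef Rstar_k0 sub_im.
by exists la, lb; split=> // k; rewrite re im.
Qed.

End fourier.

Theorem lemma5p3 (R : realType) (m n : nat)
  (mu : {measure set (m.-tuple R) -> \bar R}) (p : R) (Rm : 'M[R]_(m, n)) :
  (n < m)%N -> 1 < p ->
  is_lebesgue_measure mu ->
  (forall k : 'rV[int]_m, k != 0 -> Rstar_k Rm k != 0) ->
  closed_linear_subspace mu p (G_R mu p Rm).
Proof.
move=> _ /ltW p_ge1 /lebesgue_Ycell muY1 _.
have -> : G_R mu p Rm = fun w => Lp_per mu p w /\
    forall kb, (moment mu (fourier_kernel kb) w <= Rstar_k Rm kb.1)%MS.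
  by apply/funext => w; apply/propext; exact: G_R_moments.
apply: closed_linear_subspace_moments => //.
  exact: measurable_fourier_kernel.
exact: fourier_kernel_le1.
Qed.
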